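(* Let $X$ be a space possessing a binary normal closed subbase $\mathcal S$, and let $Z$ be an arbitrary space. Then every $\mathcal S$-continuous set-valued map $\Phi\colon Z\to X$ whose values $\Phi(z)$, $z\in Z$, are (nonempty) closed $\mathcal S$-convex subsets of $X$ has a continuous single-valued selection, i.e. a continuous map $h\colon Z\to X$ with $h(z)\in\Phi(z)$ for all $z\in Z$. More generally, if $A\subset Z$ is closed and every continuous map from $A$ to $X$ can be extended to a continuous map from $Z$ to $X$, then every continuous selection $g\colon A\to X$ for $\Phi|A$ extends to a continuous selection $h\colon Z\to X$ for $\Phi$ (i.e. $h|A=g$).
   Context: All spaces are Tychonoff; single-valued maps are continuous; set-valued maps have nonempty values. A family $\mathcal S$ of closed subsets of $X$ is a closed subbase if every closed subset of $X$ is an intersection of finite unions of members of $\mathcal S$. A family of sets is linked if any two of its members intersect; $\mathcal S$ is binary if every linked subfamily of $\mathcal S$ has nonempty intersection. $\mathcal S$ is normal if for every $S_0,S_1\in\mathcal S$ with $S_0\cap S_1=\varnothing$ there exist $T_0,T_1\in\mathcal S$ with $S_0\cap T_1=\varnothing=T_0\cap S_1$ and $T_0\cup T_1=X$. For $B\subset X$ let $I_{\mathcal S}(B)=\bigcap\{S\in\mathcal S: B\subset S\}$. A set $B\subset X$ is $\mathcal S$-convex if $I_{\mathcal S}(\{x,y\})\subset B$ for all $x,y\in B$. A set-valued map $\Phi\colon Z\to X$ is $\mathcal S$-continuous if for every $S\in\mathcal S$ both sets $\{z\in Z:\Phi(z)\cap(X\setminus S)\neq\varnothing\}$ and $\{z\in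 Z:\Phi(z)\subset X\setminus S\}$ are open in $Z$. *)

From HB Require Import structures.
From mathcomp Require Import all_boot all_order all_algebra.
From mathcomp Require Import all_classical all_reals all_analysis.
Set Implicit Arguments. Unset Strict Implicit. Unset Printing Implicit Defensive.
Import Order.TTheory GRing.Theory Num.Theory.
Local Open Scope classical_set_scope.

Definition tychonoff_space (T : topologicalType) : Prop :=
  completely_regular_space T /\ hausdorff_space T.

Section subbase.
Context {X : topologicalType}.
Implicit Types (S : set (set X)) (B : set X).

Definition finite_union_of S (G : set X) : Prop :=
  exists s : seq (set X), (forall A, A \in s -> S A) /\
    G = \big[setU/set0]_(A <- s) A.

Definition closed_subbase S : Prop :=
  (forall A, S A -> closed A) /\
  (forall F, closed F -> exists G : set (set X),
      (forall U, G U -> finite_union_of S U) /\ F = \bigcap_(U in G) U).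

Definition linked (L : set (set X)) : Prop :=
  forall A B, L A -> L B -> A `&` B !=set0.

Definition binary S : Prop :=
  forall L : set (set X), L `<=` S -> linked L -> \bigcap_(A in L) A !=set0.

Definition normal_family S : Prop :=
  forall S0 S1 : set X, S S0 -> S S1 -> S0 `&` S1 = set0 ->
    exists T0 T1 : set X, [/\ S T0, S T1, S0 `&` T1 = set0, T0 `&` S1 = set0
                    & T0 `|` T1 = setT].

Definition I_S S B : set X := \bigcap_(A in [set A | S A /\ B `<=` A]) A.

Definition S_convex S B : Prop :=
  forall x y, B x -> B y -> I_S S [set x; y] `<=` B.

Definition S_continuous {Z : topologicalType} S (Phi : Z -> set X) : Prop :=
  forall A, S A ->
    open [set z | Phi z `&` ~` A !=set0] /\ open [set z | Phi z `<=` ~` A].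
End subbase.

From HB Require Import structures.
From mathcomp Require Import all_boot all_order all_algebra.
From mathcomp Require Import all_classical all_reals all_analysis.
From mathcomp Require Import finmap.
Set Implicit Arguments. Unset Strict Implicit. Unset Printing Implicit Defensive.
Local Open Scope classical_set_scope.

(* The selection is a gate map: for a nonempty closed S-convex set C and a
   point x, the members T of S that either contain x and meet C, or contain C,
   form a linked family; by binarity they have a common point, and it is
   unique and lies in C.  Taking h z to be the gate of
   G z in Phi z, for any continuous G : Z -> X, gives a selection that agrees
   with G wherever G already selects, and the S-continuity of Phi turns into
   continuity of h because S is a normal closed subbase. *)

Lemma setU_eqT_cases {T : Type} (A B : set T) x : A `|` B = setT -> A x \/ B x.
Proof. by move=> AB; have : (A `|` B) x by rewrite AB. Qed.

Lemma setI_eq0_notin {T : Type} (A B : set T) x : A `&` B = set0 -> A x -> ~ B x.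
Proof. by move=> AB Ax Bx; have : (A `&` B) x by []; rewrite AB. Qed.

Section binary_normal_subbase.
Variables (X : topologicalType) (S : set (set X)).
Hypotheses (cS : closed_subbase S) (hX : hausdorff_space X).
Hypotheses (bS : binary S) (nS : normal_family S).

Lemma closed_subbase_cover F y : closed F -> ~ F y ->
  exists s : seq (set X), [/\ forall A, A \in s -> S A,
    F `<=` \bigcup_(A in [set` s]) A & ~ (\bigcup_(A in [set` s]) A) y].
Proof.
move=> cF Fy; have [G [GS FE]] := cS.2 F cF.
have [U GU Uy] : exists2 U, G U & ~ U y.
  apply: contrapT => nU; apply: Fy; rewrite FE => U GU.
  by apply: contrapT => Uy; apply: nU; exists U.
have [s [sS UE]] := GS U GU.
by exists s; rewrite bigcup_seq -UE; split => // x; rewrite FE; apply.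
Qed.

Lemma subbase_separates_points p y : p <> y -> exists2 T, S T & T p /\ ~ T y.
Proof.
move=> py; have cp : closed [set p].
  exact/accessible_closed_set1/hausdorff_accessible.
have [s [sS sp sy]] := closed_subbase_cover cp (nesym py).
have [T sT Tp] := sp p erefl.
by exists T; [exact: sS | split => // Ty; apply: sy; exists T].
Qed.

Lemma subbase_member_sep A y : S A -> ~ A y ->
  exists2 T, S T & T y /\ T `&` A = set0.
Proof.
move=> SA Ay; have [A0|/set0P [a Aa]] := eqVneq A set0.
  have AA : A `&` A = set0 by rewrite A0 setI0.
  have [T0 [T1 [ST0 ST1 _ _ U]]] := nS SA SA AA.
  by case: (setU_eqT_cases y U) => Ty; [exists T0 | exists T1] => //; rewrite A0 setI0.
apply: contrapT => noT.
have meetA T : S T -> T y -> T `&` A !=set0.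
  by move=> ST Ty; apply: contrapT => /nonemptyPn TA; apply: noT; exists T.
pose L := [set T | S T /\ T y] `|` [set A].
have [z Lz] : \bigcap_(T in L) T !=set0.
  apply: bS => [T [[]|->] //|T1 T2].
  move=> [[S1 y1]|->] [[S2 y2]|->]; [by exists y | exact: meetA | | by exists a].
  by rewrite setIC; apply: meetA.
have zy : z = y.
  apply: contrapT => /nesym yz; have [T ST [Ty Tz]] := subbase_separates_points yz.
  by apply: Tz; apply: Lz; left.
by apply: Ay; rewrite -zy; apply: Lz; right.
Qed.

Lemma convex_linked_pair C a b L : S_convex S C -> C a -> C b ->
  L `<=` S -> linked L -> (forall T, L T -> T a \/ T b) ->
  C `&` \bigcap_(T in L) T !=set0.
Proof.
move=> convC Ca Cb LS linL Lab.
pose M := L `|` [set T | S T /\ T a /\ T b].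
have [q Mq] : \bigcap_(T in M) T !=set0.
  apply: bS => [T [/LS|[]] //|T1 T2].
  move=> [L1|[_ [a1 b1]]] [L2|[_ [a2 b2]]]; first exact: linL.
  - by case: (Lab _ L1) => ?; [exists a | exists b].
  - by case: (Lab _ L2) => ?; [exists a | exists b].
  - by exists a.
exists q; split; last by move=> T LT; apply: Mq; left.
apply: (convC a b Ca Cb) => T [ST abT]; apply: Mq; right.
by split => //; split; apply: abT; [left | right].
Qed.

Lemma convex_linked_seq C (s : seq (set X)) : S_convex S C -> C !=set0 ->
  (forall A, A \in s -> S A /\ A `&` C !=set0) -> linked [set` s] ->
  C `&` \bigcap_(A in [set` s]) A !=set0.
Proof.
move=> convC [c Cc]; elim: s => [|A s IH] sS links.
  by exists c; split => // A; rewrite /= in_nil.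
have [|//|q [Cq sq]] := IH.
- by move=> B Bs; apply: sS; rewrite inE Bs orbT.
- by move=> B1 B2 B1s B2s; apply: links; rewrite /= inE ?B1s ?B2s orbT.
have [_ [x [Ax Cx]]] := sS A (mem_head _ _).
apply: (convex_linked_pair convC Cq Cx) => [B /sS [] //|//|B].
by rewrite /= inE => /orP[/eqP->|/sq]; [right | left].
Qed.

Lemma convex_subbase_partner C A y : S A -> ~ A y ->
  (forall B, S B -> C `<=` B -> B y) ->
  exists P, [/\ S P, P y, A `&` P = set0 & P `&` C !=set0].
Proof.
move=> SA Ay CBy; have [T ST [Ty TA]] := subbase_member_sep SA Ay.
have [P0 [P1 [SP0 SP1 AP1 P0T U]]] := nS SA ST (etrans (setIC A T) TA).
have [a Ca P0a] : exists2 a, C a & ~ P0 a.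
  apply: contrapT => CP0; apply: (setI_eq0_notin P0T _ Ty); apply: CBy => // x Cx.
  by apply: contrapT => P0x; apply: CP0; exists x.
exists P1; split => //; last by exists a; split => //; case: (setU_eqT_cases a U).
by case: (setU_eqT_cases y U) => // /(setI_eq0_notin P0T).
Qed.

Lemma convex_subbase_sep C y : closed C -> C !=set0 -> S_convex S C -> ~ C y ->
  exists2 A, S A & C `<=` A /\ ~ A y.
Proof.
move=> cC C0 convC Cy; apply: contrapT => noA.
have CBy B : S B -> C `<=` B -> B y.
  by move=> SB CB; apply: contrapT => By; apply: noA; exists B.
have [s [sS Cs sy]] := closed_subbase_cover cC Cy.
have /choice [f fP] : forall A, exists P, A \in s ->
    [/\ S P, P y, A `&` P = set0 & P `&` C !=set0].
  move=> A; have [As|_] := boolP (A \in s); last by exists setT.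
  have [P PP] := convex_subbase_partner (sS A As) (fun Ay => sy (ex_intro2 _ _ A As Ay)) CBy.
  by exists P.
have [|B1 B2|q [Cq qf]] := convex_linked_seq (s := map f s) convC C0.
- by move=> _ /mapP [A As ->]; have [] := fP A As.
- move=> /mapP [A1 A1s ->] /mapP [A2 A2s ->]; exists y.
  by have [_ ? _ _] := fP A1 A1s; have [_ ? _ _] := fP A2 A2s.
have [A As Aq] := Cs q Cq; have [_ _ Af _] := fP A As.
by apply: (setI_eq0_notin Af Aq); apply: qf; exact: map_f.
Qed.

Lemma closed_subbase_continuous (Z : topologicalType) (f : Z -> X) :
  (forall A z, S A -> ~ A (f z) -> \forall w \near z, ~ A (f w)) -> continuous f.
Proof.
move=> fS; apply/continuousP => O oO; rewrite openE => z Oz.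
have cO : closed (~` O) by rewrite closedC.
have [s [sS Os sz]] := closed_subbase_cover cO (fun nOz => nOz Oz).
have : \forall w \near z, forall A, A \in s -> ~ A (f w).
  apply: filterS (@filter_bigI _ _ (seq_fset tt s) (fun A => [set w | ~ A (f w)])
    (nbhs z) _ _) => [w sw A As|A].
    by apply: sw; rewrite -(seq_fsetE tt) in As.
  by rewrite seq_fsetE => As; apply: fS; [exact: sS | move=> Az; apply: sz; exists A].
apply: filterS => w nsw; apply: contrapT => nOw.
by have [A As Aw] := Os (f w) nOw; apply: nsw As Aw.
Qed.

Definition gate_family (C : set X) (x : X) : set (set X) :=
  [set T | S T /\ ((T x /\ T `&` C !=set0) \/ C `<=` T)].

Definition gate (C : set X) (x : X) : set X := \bigcap_(T in gate_family C x) T.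

Lemma gate_nonempty C x : C !=set0 -> gate C x !=set0.
Proof.
move=> [c Cc]; apply: bS => [T [] //|T1 T2].
move=> [_ [[x1 [c1 [T1c1 Cc1]]]|C1]] [_ [[x2 [c2 [T2c2 Cc2]]]|C2]].
- by exists x.
- by exists c1; split => //; apply: C2.
- by exists c2; split => //; apply: C1.
- by exists c; split; [apply: C1 | apply: C2].
Qed.

Lemma gate_id C x : C x -> gate C x x.
Proof. by move=> Cx T [_ [[]|CT]] //; apply: CT. Qed.

Lemma gate_sub C x : closed C -> C !=set0 -> S_convex S C -> gate C x `<=` C.
Proof.
move=> cC C0 convC p gp; apply: contrapT => Cp.
have [A SA [CA Ap]] := convex_subbase_sep cC C0 convC Cp.
by apply: Ap; apply: gp; split => //; right.
Qed.

Lemma gate_unique C x p q : closed C -> C !=set0 -> S_convex S C ->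
  gate C x p -> gate C x q -> p = q.
Proof.
move=> cC C0 convC gp gq; apply: contrapT => pq.
have [Cp Cq] := (gate_sub cC C0 convC gp, gate_sub cC C0 convC gq).
have [T ST [Tp Tq]] := subbase_separates_points pq.
have [T' ST' [T'q T'T]] := subbase_member_sep ST Tq.
have [T0 [T1 [ST0 ST1 TT1 T0T' U]]] := nS ST ST' (etrans (setIC T T') T'T).
have T0p : T0 p by case: (setU_eqT_cases p U) => // /(setI_eq0_notin TT1 Tp).
have T1q : T1 q by case: (setU_eqT_cases q U) => // /(setI_eq0_notin T0T') /(_ T'q).
case: (setU_eqT_cases x U) => [T0x|T1x].
- by apply: (setI_eq0_notin T0T' _ T'q); apply: gq; split; [|left; split; [|exists p]].
- by apply: (setI_eq0_notin TT1 Tp); apply: gp; split; [|left; split; [|exists q]].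
Qed.

(* Where S-continuity of Phi enters: whether a member of S belongs to the gate
   family is decided by open conditions on Phi and G. *)
Lemma gate_family_near (Z : topologicalType) (Phi : Z -> set X) (G : Z -> X) z0 T0 T1 :
  S_continuous S Phi -> continuous G -> S T0 -> S T1 -> T0 `|` T1 = setT ->
  ~ gate_family (Phi z0) (G z0) T1 ->
  \forall z \near z0, gate_family (Phi z) (G z) T0.
Proof.
move=> PhiS cG ST0 ST1 U notT1.
have T0C w : ~ T1 w -> T0 w by case: (setU_eqT_cases w U).
have [GT1|GT1] := pselect (T1 (G z0)).
  have nb : \forall z \near z0, Phi z `<=` ~` T1.
    apply: open_nbhs_nbhs; split; first exact: (PhiS T1 ST1).2.
    by move=> w Pw T1w; apply: notT1; split => //; left; split => //; exists w.
  by apply: filterS nb => z PT1; split => //; right => w /PT1 /T0C.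
have nb1 : \forall z \near z0, Phi z `&` ~` T1 !=set0.
  apply: open_nbhs_nbhs; split; first exact: (PhiS T1 ST1).1.
  apply: contrapT => /nonemptyPn PT1; apply: notT1; split => //; right => w Pw.
  by apply: contrapT => T1w; apply: (setI_eq0_notin PT1 Pw).
have nb2 : \forall z \near z0, ~ T1 (G z).
  apply: (cG z0 (~` T1)); apply: open_nbhs_nbhs; split => //.
  by apply: closed_openC; apply: cS.1.
apply: filterS (filterI nb1 nb2) => z [[v [Pv T1v]] GT1z]; split => //.
by left; split; [exact: T0C | exists v; split => //; exact: T0C].
Qed.

Lemma gate_selection_continuous (Z : topologicalType) (Phi : Z -> set X) (G h : Z -> X) :
  S_continuous S Phi -> continuous G -> (forall z, gate (Phi z) (G z) (h z)) ->
  continuous h.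
Proof.
move=> PhiS cG hg; apply: closed_subbase_continuous => A z0 SA Ah.
have [T ST [Th TA]] := subbase_member_sep SA Ah.
have [T0 [T1 [ST0 ST1 TT1 T0A U]]] := nS ST SA TA.
have notT1 : ~ gate_family (Phi z0) (G z0) T1.
  by move=> /(hg z0); apply: setI_eq0_notin TT1 Th.
apply: filterS (gate_family_near PhiS cG ST0 ST1 U notT1) => z T0z.
exact: setI_eq0_notin T0A (hg z T0 T0z).
Qed.

Lemma gate_selection (Z : topologicalType) (Phi : Z -> set X) (G : Z -> X) :
  (forall z, Phi z !=set0 /\ closed (Phi z) /\ S_convex S (Phi z)) ->
  S_continuous S Phi -> continuous G ->
  exists h : Z -> X, [/\ continuous h, forall z, Phi z (h z)
    & forall z, Phi z (G z) -> h z = G z].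
Proof.
move=> PhiC PhiS cG.
have /choice [h hg] z : exists p, gate (Phi z) (G z) p.
  by apply: gate_nonempty; case: (PhiC z).
exists h; split; first exact: gate_selection_continuous hg.
  by move=> z; have [? [? ?]] := PhiC z; exact: gate_sub (hg z).
move=> z PG; have [? [? ?]] := PhiC z.
by apply: (gate_unique _ _ _ (hg z)) => //; apply: gate_id.
Qed.

End binary_normal_subbase.

Unset Implicit Arguments.
Set Strict Implicit.

Theorem theorem1p1 (X Z : topologicalType) (S : set (set X)) :
  tychonoff_space X -> tychonoff_space Z ->
  closed_subbase S -> binary S -> normal_family S ->
  (forall Phi : Z -> set X,
     (forall z, Phi z !=set0 /\ closed (Phi z) /\ S_convex S (Phi z)) ->
     S_continuous S Phi ->
     exists h : Z -> X, continuous h /\ forall z, Phi z (h z)) /\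
  (forall A : set Z, closed A ->
     (forall g : Z -> X, {within A, continuous g} ->
        exists h : Z -> X, continuous h /\ {in A, h =1 g}) ->
   forall Phi : Z -> set X,
     (forall z, Phi z !=set0 /\ closed (Phi z) /\ S_convex S (Phi z)) ->
     S_continuous S Phi ->
   forall g : Z -> X, {within A, continuous g} -> (forall a, A a -> Phi a (g a)) ->
     exists h : Z -> X, continuous h /\ (forall z, Phi z (h z)) /\ {in A, h =1 g}).
Proof.
move=> [_ hX] _ cS bS nS; split.
  move=> Phi PhiC PhiS.
  (* Binarity applied to the empty family shows that X is nonempty. *)
  have [x0 _] : \bigcap_(A in (set0 : set (set X))) A !=set0 by apply: bS => // ? ? [].
  have [h [ch Ph _]] := gate_selection cS hX bS nS PhiC PhiS (@cst_continuous Z X x0).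
  by exists h.
move=> A cA ext Phi PhiC PhiS g cg Pg.
have [G [cG GA]] := ext g cg.
have [h [ch Ph hG]] := gate_selection cS hX bS nS PhiC PhiS cG.
exists h; split=> //; split=> // a Aa.
by rewrite hG (GA a Aa) //; apply: Pg; rewrite -in_setE.
Qed.
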